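(* Let $S$ be an infinite set and $\mathcal{F}\subseteq 2^S$ a family closed under finite unions (i.e. $A\cup B\in\mathcal{F}$ whenever $A,B\in\mathcal{F}$). Then for all classification problems $\mathbf{A}$ and $\mathbf{B}$ with $\mathbf{B}\leq\mathbf{A}$: if $\mathbf{A}\in \mathit{class}_{|\mathbf{A}|}(\mathcal{F})$, then $\mathbf{B}\in \mathit{class}_{|\mathbf{B}|}(\mathcal{F})$.
   Context: A vector $\mathbf{A}=(A_1,\dots,A_k)$ ($k\ge 1$) of subsets of $S$ has length $|\mathbf{A}|=k$. For vectors $\mathbf{B}=(B_1,\dots,B_m)$ and $\mathbf{A}=(A_1,\dots,A_k)$, $\mathbf{B}\leq\mathbf{A}$ means $1\le m\le k$ and there is an injective $\sigma:\{1,\dots,m\}\to\{1,\dots,k\}$ with $B_i\subseteq A_{\sigma(i)}$ for all $i$. A classification problem is a vector $(A_1,\dots,A_k)$, $k\ge1$, of pairwise disjoint infinite subsets of $S$. An $\mathcal{F}$-partition is a vector $(Q_1,\dots,Q_k)$ of pairwise disjoint sets $Q_i\in\mathcal{F}$ with $Q_1\cup\dots\cup Q_k=S$. $\mathit{class}_k(\mathcal{F})$ is the set of classification problems $\mathbf{A}$ with $|\mathbf{A}|=k$ for which an $\mathcal{F}$-partition $\mathbf{Q}$ with $|\mathbf{Q}|=k$ and $\mathbf{A}\leq\mathbf{Q}$ exists. *)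

From mathcomp Require Import all_boot.
From mathcomp Require Import boolp classical_sets cardinality.
Set Implicit Arguments. Unset Strict Implicit. Unset Printing Implicit Defensive.
Local Open Scope classical_set_scope.

Definition vec (S : Type) (k : nat) := 'I_k -> set S.

Definition vec_le (S : Type) (m k : nat) (B : vec S m) (A : vec S k) : Prop :=
  (1 <= m)%N /\ (m <= k)%N /\
  exists sigma : 'I_m -> 'I_k, injective sigma /\ forall i, B i `<=` A (sigma i).

Definition classification_problem (S : Type) (k : nat) (A : vec S k) : Prop :=
  (1 <= k)%N /\
  (forall i j, i <> j -> A i `&` A j = set0) /\
  (forall i, ~ finite_set (A i)).

Definition F_partition (S : Type) (F : set (set S)) (k : nat) (Q : vec S k) : Prop :=
  (1 <= k)%N /\
  (forall i, F (Q i)) /\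
  (forall i j, i <> j -> Q i `&` Q j = set0) /\
  (\bigcup_(i in [set: 'I_k]) Q i = [set: S]).

Definition in_class (S : Type) (F : set (set S)) (k : nat) (A : vec S k) : Prop :=
  classification_problem A /\
  exists Q : vec S k, F_partition F Q /\ vec_le A Q.

(* Compose the two embeddings B <= A <= Q into a single injection rho of the
   indices of B into those of an F-partition Q.  Coarsen Q to |B| blocks: block
   i > 0 is Q (rho i), and block 0 collects Q (rho 0) together with every Q j
   not hit by rho.  Block 0 is a nonempty finite union of members of F, hence in
   F; the blocks remain disjoint and cover S, and B_i <= Q (rho i) <= block i. *)
From mathcomp Require Import all_boot.
From mathcomp Require Import boolp classical_sets cardinality.
Set Implicit Arguments. Unset Strict Implicit. Unset Printing Implicit Defensive.
Local Open Scope classical_set_scope.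

Lemma vec_le_trans (S : Type) (m k n : nat)
    (B : vec S m) (A : vec S k) (Q : vec S n) :
  vec_le B A -> vec_le A Q -> vec_le B Q.
Proof.
move=> [m1 [mk [sigma [sigma_inj BA]]]] [_ [kn [tau [tau_inj AQ]]]].
split=> //; split; first exact: leq_trans kn.
exists (tau \o sigma); split; first exact: inj_comp.
by move=> i x /BA /AQ.
Qed.

Lemma disjoint_vec_index_unique (S : Type) (k : nat) (Q : vec S k) i j x :
  (forall i j, i <> j -> Q i `&` Q j = set0) -> Q i x -> Q j x -> i = j.
Proof.
move=> dQ Qix Qjx; apply: contrapT => /dQ /seteqP [+ _].
by move=> /(_ x (conj Qix Qjx)).
Qed.

Section UnionClosed.
Variables (T : Type) (F : set (set T)).
Hypothesis F_setU : forall X Y, F X -> F Y -> F (X `|` Y).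

Lemma setU_closed_bigcup_seq (I : eqType) (Q : I -> set T) (x : I) (s : seq I) :
  (forall i, F (Q i)) -> F (\bigcup_(i in [set` x :: s]) Q i).
Proof.
move=> FQ; elim: s x => [|y s IHs] x.
  by rewrite set_cons1 bigcup_set1.
have -> : [set` x :: y :: s] = x |` [set` y :: s].
  apply/seteqP; split=> i /=.
    by rewrite in_cons; case/orP=> [/eqP|]; [left|right].
  by case=> [->|yi]; rewrite in_cons ?eqxx ?yi ?orbT.
by rewrite bigcup_setU1; apply: F_setU.
Qed.

Lemma setU_closed_bigcup_fin (I : finType) (Q : I -> set T) (P : set I) i0 :
  P i0 -> (forall i, F (Q i)) -> F (\bigcup_(i in P) Q i).
Proof.
move=> Pi0 FQ.
have -> : P = [set` i0 :: [seq i <- enum I | `[< P i >]]].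
  apply/seteqP; split=> i /=; rewrite inE.
    by move=> Pi; rewrite mem_filter mem_enum andbT; apply/orP; right; apply/asboolP.
  by case/orP=> [/eqP -> //|]; rewrite mem_filter => /andP [/asboolP].
exact: setU_closed_bigcup_seq.
Qed.

End UnionClosed.

Section Coarsening.
Variables (S : Type) (k m : nat) (Q : vec S k) (rho : 'I_m.+1 -> 'I_k).

Definition merged_indices : set 'I_k := [set j | j = rho ord0 \/ ~ range rho j].

Definition coarsen : vec S m.+1 :=
  fun i => if i == ord0 then \bigcup_(j in merged_indices) Q j else Q (rho i).

Lemma coarsen_sub i : Q (rho i) `<=` coarsen i.
Proof.
rewrite /coarsen; case: eqP => [-> x Qx|_ //].
by exists (rho ord0) => //; left.
Qed.

Lemma coarsen_in_F (F : set (set S)) :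
  (forall X Y, F X -> F Y -> F (X `|` Y)) -> (forall j, F (Q j)) ->
  forall i, F (coarsen i).
Proof.
move=> F_setU FQ i; rewrite /coarsen; case: eqP => _ //.
by apply: (setU_closed_bigcup_fin F_setU (i0 := rho ord0)) => //; left.
Qed.

Hypothesis rho_inj : injective rho.
Hypothesis Q_disjoint : forall i j, i <> j -> Q i `&` Q j = set0.

Lemma coarsen_disjoint i j : i <> j -> coarsen i `&` coarsen j = set0.
Proof.
have merged_disjoint l : l != ord0 ->
    (\bigcup_(j in merged_indices) Q j) `&` Q (rho l) = set0.
  move=> l_neq0; apply/seteqP; split=> // x [[n merged_n Qnx] Qx].
  have en := disjoint_vec_index_unique Q_disjoint Qnx Qx.
  case: merged_n => [|]; rewrite en; last by case; exists l.
  by move/rho_inj/eqP; rewrite (negPf l_neq0).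
move=> nij; rewrite /coarsen.
case: (eqVneq i ord0) => [ei|ni]; case: (eqVneq j ord0) => [ej|nj].
- by case: nij; rewrite ei ej.
- exact: merged_disjoint.
- by rewrite setIC merged_disjoint.
- by apply: Q_disjoint => /rho_inj.
Qed.

Lemma coarsen_cover :
  \bigcup_(j in [set: 'I_k]) Q j = [set: S] ->
  \bigcup_(i in [set: 'I_m.+1]) coarsen i = [set: S].
Proof.
move=> Q_cover; apply/seteqP; split=> // x _.
have [j _ Qjx] : (\bigcup_(j in [set: 'I_k]) Q j) x by rewrite Q_cover.
have [[i _ rho_ij]|not_range] := pselect (range rho j).
  by exists i => //; apply: coarsen_sub; rewrite rho_ij.
by exists ord0 => //; rewrite /coarsen eqxx; exists j => //; right.
Qed.

End Coarsening.

Lemma F_partition_coarsen (S : Type) (F : set (set S)) (k m : nat)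
    (Q : vec S k) (rho : 'I_m.+1 -> 'I_k) :
  (forall X Y, F X -> F Y -> F (X `|` Y)) -> injective rho ->
  F_partition F Q -> F_partition F (coarsen Q rho).
Proof.
move=> F_setU rho_inj [_ [FQ [Q_disjoint Q_cover]]].
split=> //; split; first exact: coarsen_in_F.
split; first exact: coarsen_disjoint.
exact: coarsen_cover.
Qed.

Theorem proposition2p2 (S : Type) (F : set (set S)) :
  ~ finite_set [set: S] ->
  (forall X Y, F X -> F Y -> F (X `|` Y)) ->
  forall (k m : nat) (A : vec S k) (B : vec S m),
    classification_problem A -> classification_problem B ->
    vec_le B A ->
    in_class F A -> in_class F B.
Proof.
move=> _ F_setU k m A B _ cB BA [_ [Q [FQ AQ]]].
split=> //.
have [m_gt0 [_ [rho [rho_inj BQ]]]] := vec_le_trans BA AQ.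
case: m B rho rho_inj BQ m_gt0 {cB BA} => // m B rho rho_inj BQ _.
exists (coarsen Q rho); split; first exact: F_partition_coarsen.
split=> //; split=> //; exists id; split=> // i x /BQ.
exact: coarsen_sub.
Qed.
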